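(* Let $K$ be an idempotent semifield. Then every finite division semialgebra $D$ over $K$ is archimedean, i.e. for every $x\in D$ there exists $y\in K$ with $x+y=y$.
   Context: A (possibly noncommutative) semiring has a commutative associative addition with identity $0$ and an associative multiplication with identity $1$, satisfying both distributive laws; a division semiring is one in which every nonzero element is invertible. A semifield is a commutative division semiring; it is idempotent if $x+x=x$ for all $x$. A division semialgebra over a semifield $K$ is a division semiring $D$ with an injective homomorphism from $K$ into the center of $D$ (identify $K$ with its image); it is finite if $D$ is finitely generated as a left $K$-semimodule. *)

From HB Require Import structures.
From mathcomp Require Import all_boot all_order all_algebra.
Set Implicit Arguments. Unset Strict Implicit. Unset Printing Implicit Defensive.
Import GRing.Theory.
Local Open Scope ring_scope.

(* A (possibly noncommutative) semiring: mathcomp's pzSemiRingType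
   (0 absorbing, 0 = 1 allowed). *)

Definition is_division_semiring (D : pzSemiRingType) : Prop :=
  forall x : D, x <> 0 -> exists y : D, x * y = 1 /\ y * x = 1.

Definition is_semifield (K : comPzSemiRingType) : Prop := is_division_semiring K.

Definition is_idempotent (K : pzSemiRingType) : Prop := forall x : K, x + x = x.

Definition is_division_semialgebra (K : comPzSemiRingType) (D : pzSemiRingType)
  (f : {rmorphism K -> D}) : Prop :=
  [/\ is_division_semiring D, injective f & forall (k : K) (x : D), f k * x = x * f k].

(* Finite: D is finitely generated as a left K-semimodule (scalar action k.x = f k * x). *)
Definition finite_semialgebra (K : comPzSemiRingType) (D : pzSemiRingType)
  (f : {rmorphism K -> D}) : Prop :=
  exists (n : nat) (d : 'I_n -> D),
    forall x : D, exists c : 'I_n -> K, x = \sum_(i < n) f (c i) * d i.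

Definition archimedean_semialgebra (K : comPzSemiRingType) (D : pzSemiRingType)
  (f : {rmorphism K -> D}) : Prop :=
  forall x : D, exists y : K, x + f y = f y.

From mathcomp Require Import all_boot all_order all_algebra.
Set Implicit Arguments. Unset Strict Implicit. Unset Printing Implicit Defensive.
Import GRing.Theory.
Local Open Scope ring_scope.

(* In an idempotent semiring, [a + b = b] is a partial order compatible with
   sums and products.  With generators [d_i] of D over K, put
   [z = 1 + sum_i d_i].  Every [x = sum_i c_i d_i] then lies below
   [(sum_i c_i) z]; applied to [x = z^2] and cancelling one factor [z] with
   [z^-1], this gives [z <= k] for a scalar [k], hence [x <= (sum_i c_i) k]. *)

Section IdempotentOrder.
Variable R : pzSemiRingType.

Definition idem_le (a b : R) := a + b = b.

Lemma idem_le_trans a b c : idem_le a b -> idem_le b c -> idem_le a c.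
Proof. by rewrite /idem_le => hab hbc; rewrite -hbc addrA hab. Qed.

Lemma idem_leMr a b w : idem_le a b -> idem_le (a * w) (b * w).
Proof. by rewrite /idem_le -mulrDl => ->. Qed.

Lemma idem_leMl a b w : idem_le a b -> idem_le (w * a) (w * b).
Proof. by rewrite /idem_le -mulrDr => ->. Qed.

Lemma idem_le_sum n (F : 'I_n -> R) w :
  (forall i, idem_le (F i) w) -> idem_le (\sum_(i < n) F i) w.
Proof.
move=> hF; apply: (big_ind (fun v => idem_le v w)) => //; first exact: add0r.
by move=> a b ha hb; rewrite /idem_le -addrA hb ha.
Qed.

Lemma idem_le_rmorph (S : pzSemiRingType) (g : {rmorphism S -> R}) a b :
  a + b = b -> idem_le (g a) (g b).
Proof. by rewrite /idem_le -rmorphD => ->. Qed.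

Lemma idem_le_divr a b z zi :
  z * zi = 1 -> idem_le (a * z) (b * z) -> idem_le a b.
Proof. by move=> zzi /(idem_leMr zi); rewrite -!mulrA zzi !mulr1. Qed.

Hypothesis idemR : forall x : R, x + x = x.

Lemma idem_leDr a b : idem_le a (a + b).
Proof. by rewrite /idem_le addrA idemR. Qed.

Lemma idem_leDl a b : idem_le a (b + a).
Proof. by rewrite addrC; apply: idem_leDr. Qed.

Lemma idem_le_sumr n (F : 'I_n -> R) i : idem_le (F i) (\sum_(j < n) F j).
Proof. by rewrite (bigD1 i) //=; apply: idem_leDr. Qed.

Lemma idem_addr_eq0 (a b : R) : a + b = 0 -> a = 0.
Proof. by move=> ab0; have := idem_leDr a b; rewrite /idem_le ab0 addr0. Qed.

End IdempotentOrder.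

Lemma idempotent_rmorph_image (K : pzSemiRingType) (D : pzSemiRingType)
  (f : {rmorphism K -> D}) :
  is_idempotent K -> forall x : D, x + x = x.
Proof.
move=> idK x.
by rewrite -{1 2}(mulr1 x) -mulrDr -(rmorph1 f) -rmorphD idK rmorph1 mulr1.
Qed.

Section FinitelyGenerated.
Variables (K : comPzSemiRingType) (D : pzSemiRingType) (f : {rmorphism K -> D}).
Hypothesis idemD : forall x : D, x + x = x.
Hypothesis idemK : is_idempotent K.
Variables (n : nat) (d : 'I_n -> D).

Let z : D := 1 + \sum_(i < n) d i.

Lemma span_le_scaled_gen_sum (c : 'I_n -> K) :
  idem_le (\sum_(i < n) f (c i) * d i) (f (\sum_(i < n) c i) * z).
Proof.
apply: idem_le_sum => i; apply: (@idem_le_trans _ _ (f (c i) * z)).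
  apply: idem_leMl; apply: (@idem_le_trans _ _ (\sum_(j < n) d j)).
    exact: idem_le_sumr.
  exact: idem_leDl.
by apply/idem_leMr/idem_le_rmorph/(idem_le_sumr idemK).
Qed.

Hypothesis spanD : forall x : D, exists c : 'I_n -> K, x = \sum_(i < n) f (c i) * d i.

Lemma span_le_scalar_gen_sum (x : D) : exists k : K, idem_le x (f k * z).
Proof.
by have [c ->] := spanD x; exists (\sum_(i < n) c i); apply: span_le_scaled_gen_sum.
Qed.

Lemma gen_sum_le_scalar (zi : D) : z * zi = 1 -> exists k : K, idem_le z (f k).
Proof.
move=> zzi; have [k hk] := span_le_scalar_gen_sum (z * z).
by exists k; apply: (idem_le_divr zzi).
Qed.

End FinitelyGenerated.

Theorem mainTheorem19 (K : comPzSemiRingType) (D : pzSemiRingType)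
  (f : {rmorphism K -> D}) :
  is_semifield K -> is_idempotent K ->
  is_division_semialgebra f -> finite_semialgebra f ->
  archimedean_semialgebra f.
Proof.
move=> _ idemK [divD _ _] [n [d spanD]] x.
have idemD := idempotent_rmorph_image f idemK.
have [z0 | nz] := eqVneq (1 + \sum_(i < n) d i) 0.
  have one0 := idem_addr_eq0 idemD z0.
  by exists 0; rewrite -(mulr1 x) one0 mulr0 add0r.
have [zi [zzi _]] := divD _ (elimN eqP nz).
have [k zle] := gen_sum_le_scalar idemD idemK spanD zzi.
have [c xle] := span_le_scalar_gen_sum idemD idemK spanD x.
exists (c * k); rewrite rmorphM.
exact: idem_le_trans xle (idem_leMl _ zle).
Qed.
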